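(* For every integer $d\geq 2$ there exist $\epsilon=\epsilon(d)>0$ and $\eta=\eta(d)>0$ such that the following holds. Let $X$ be a distance-regular graph of diameter $d$ on $n$ vertices and degree $k$. If $k_t\geq (1-\epsilon)n$ for some $t\in\{1,\dots,d\}$, then the zero-weight spectral radius $\xi$ of $X$ satisfies $\xi\leq k(1-\eta)$.
   Context: A connected graph $X$ of diameter $d$ is distance-regular if there are integers $a_i,b_i,c_i$ ($0\le i\le d$) such that for all vertices $v,w$ with $\mathrm{dist}(v,w)=i$, the vertex $w$ has exactly $c_i$ neighbours at distance $i-1$ from $v$, $a_i$ neighbours at distance $i$ from $v$, and $b_i$ neighbours at distance $i+1$ from $v$. Then $X$ is $k$-regular with $k=b_0$, $c_0=b_d=0$, $c_1=1$ and $a_i+b_i+c_i=k$. For $0\le i\le d$, $k_i$ denotes the number of vertices at distance exactly $i$ from a fixed vertex (independent of the vertex). If the eigenvalues of the adjacency matrix of a $k$-regular graph on $n$ vertices are $k=\xi_1\geq\xi_2\geq\dots\geq\xi_n$, the zero-weight spectral radius is $\xi=\max\{|\xi_i|:2\le i\le n\}$. *)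

From HB Require Import structures.
From mathcomp Require Import all_boot all_order all_algebra all_field.
Set Implicit Arguments. Unset Strict Implicit. Unset Printing Implicit Defensive.
Import Order.TTheory GRing.Theory Num.Theory.

Definition simple_graph (T : finType) (e : rel T) : Prop :=
  irreflexive e /\ symmetric e.

Fixpoint within (T : finType) (e : rel T) (i : nat) (x y : T) : bool :=
  if i is j.+1 then within e j x y || [exists z, within e j x z && e z y]
  else x == y.

(* Graph distance: least i with a walk of length <= i from x to y.
   (Every distance in a connected graph is < #|T|, so the search bound
   #|T| is harmless; unreachable pairs get the value #|T|.) *)
Definition dist (T : finType) (e : rel T) (x y : T) : nat :=
  find (fun i => within e i x y) (iota 0 #|T|).

Definition connected_graph (T : finType) (e : rel T) : Prop :=
  forall x y : T, connect e x y.

Definition diameter (T : finType) (e : rel T) : nat :=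
  \max_(x : T) \max_(y : T) dist e x y.

Definition kdist (T : finType) (e : rel T) (v : T) (i : nat) : nat :=
  #|[set w | dist e v w == i]|.

Definition distance_regular (T : finType) (e : rel T) (d : nat) : Prop :=
  [/\ simple_graph e, connected_graph e, diameter e = d &
   exists a b c : nat -> nat,
     forall i, i <= d -> forall v w : T, dist e v w = i ->
       [/\ #|[set u | e w u & (dist e v u).+1 == i]| = c i,
           #|[set u | e w u & dist e v u == i]| = a i &
           #|[set u | e w u & dist e v u == i.+1]| = b i]].

Definition adj_mx (T : finType) (e : rel T) : 'M[algC]_#|T| :=
  \matrix_(i, j) ((e (enum_val i) (enum_val j))%:R)%R.

Definition adj_spectrum (T : finType) (e : rel T) : seq algC :=
  sval (closed_field_poly_normal (char_poly (adj_mx e))).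

Definition zero_weight_spectral_radius (T : finType) (e : rel T) (k : nat)
  : algC :=
  (\big[Num.max/0]_(z <- rem (k%:R : algC) (adj_spectrum e)) `|z|)%R.

From HB Require Import structures.
From mathcomp Require Import all_boot all_order all_algebra all_field.
From mathcomp Require Import ring zify.
Import Order.TTheory GRing.Theory Num.Theory.
Set Implicit Arguments. Unset Strict Implicit. Unset Printing Implicit Defensive.
Local Open Scope ring_scope.

(* Let [z <> k] be an eigenvalue of the adjacency matrix [A] and [E] the
   orthogonal projection onto its eigenspace. As a polynomial in [A], [E] lies
   in the Bose-Mesner algebra: [E u w = beta (dist u w)]. View [E] as the Gram
   matrix of vectors [g u], so that [|g u|^2 = beta 0]; from [E A = z E] and
   regularity, [k beta 1 = z beta 0]. With [s] the sign of [z], every edge [u w]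
   then has [|g u - s g w|^2 = 2 beta 0 (1 - |z| / k)], and the triangle
   inequality along a geodesic bounds [|g u - s^t g w|^2] by [4^t] times that
   for [dist u w = t]. On the other hand [E] kills the all-ones vector, so
   [sum_w beta (dist u w) = 0]; if [k_t >= 3 n / 4] this forces
   [|beta t| <= beta 0 / 3], i.e. [|g u - s^t g w|^2 >= 4 beta 0 / 3].
   Comparing the two bounds gives [k - |z| >= k / (3 * 4^d)]. The eigenvalue
   [k] itself is simple: for [z = k] the edge defect vanishes, so by
   connectivity the rows of the eigenbasis spanning that eigenspace are
   constant, and two of them cannot be orthonormal. *)

Section GraphDistance.
Variables (T : finType) (e : rel T).
Hypotheses (esym : symmetric e) (eirr : irreflexive e) (econn : connected_graph e).

Lemma within_leq i j x y : (i <= j)%N -> within e i x y -> within e j x y.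
Proof.
move=> /subnK <-; elim: (j - i)%N => [|m IH] // h.
by rewrite addSn /= IH.
Qed.

Lemma within_rcons i x z y : within e i x z -> e z y -> within e i.+1 x y.
Proof. by move=> h1 h2 /=; apply/orP; right; apply/existsP; exists z; rewrite h1. Qed.

Lemma within_cons i x z y : e x z -> within e i z y -> within e i.+1 x y.
Proof.
move=> exz; elim: i y => [|i IH] y.
  by move=> /= /eqP <-; apply/orP; right; apply/existsP; exists x; rewrite eqxx.
case/orP=> [h|/existsP[w /andP[h1 h2]]]; first by apply: within_leq (IH _ h).
exact: within_rcons (IH _ h1) h2.
Qed.

Lemma within_path p x : path e x p -> within e (size p) x (last x p).
Proof.
elim: p x => [|y p IH] x /=; first by rewrite eqxx.
by case/andP=> h1 h2; apply: within_cons h1 (IH _ h2).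
Qed.

Lemma within_card x y : within e #|T|.-1 x y.
Proof.
have /connectP[p /shortenP[p' pth uniq_p' _] ->] := econn x y.
apply: within_leq (within_path pth).
have := max_card (mem (x :: p')); rewrite (card_uniqP uniq_p') /=.
by case: #|T|.
Qed.

Lemma dist_lt_card x y : (dist e x y < #|T|)%N.
Proof.
have x_gt0 : (0 < #|T|)%N by apply/card_gt0P; exists x.
rewrite /dist -[X in (_ < X)%N](size_iota 0) -has_find; apply/hasP.
exists #|T|.-1; last exact: within_card.
by rewrite mem_iota /= add0n prednK.
Qed.

Lemma within_dist x y : within e (dist e x y) x y.
Proof.
have := @nth_find _ 0%N (fun i => within e i x y) (iota 0 #|T|).
by rewrite nth_iota ?dist_lt_card // has_find size_iota; apply; apply: dist_lt_card.
Qed.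

Lemma dist_min i x y : within e i x y -> (dist e x y <= i)%N.
Proof.
move=> h; have [hi|hi] := ltnP i #|T|; last exact: ltnW (leq_trans (dist_lt_card x y) hi).
rewrite leqNgt; apply/negP => /(@before_find _ 0%N (fun i => within e i x y)).
by rewrite nth_iota // add0n h.
Qed.

Lemma dist_adj_le v w u : e w u -> (dist e v u <= (dist e v w).+1)%N.
Proof. by move=> h; apply: dist_min (within_rcons (within_dist v w) h). Qed.

Lemma dist_xx x : dist e x x = 0%N.
Proof. by apply/eqP; rewrite -leqn0; apply: dist_min => /=. Qed.

Lemma dist_eq0 x y : (dist e x y == 0%N) = (x == y).
Proof.
apply/eqP/eqP => [h|->]; last exact: dist_xx.
by have := within_dist x y; rewrite h => /eqP.
Qed.

Lemma dist_adj x y : e x y -> dist e x y = 1%N.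
Proof.
move=> h; apply/eqP; rewrite eqn_leq lt0n dist_eq0.
have := dist_adj_le x h; rewrite dist_xx => -> /=.
by apply: contraTneq h => ->; rewrite eirr.
Qed.

Lemma dist_predP v w i : dist e v w = i.+1 -> exists2 u, e u w & dist e v u = i.
Proof.
move=> h; have := within_dist v w; rewrite h /=.
have /negbTE -> : ~~ within e i v w by apply/negP => /dist_min; rewrite h ltnn.
case/existsP=> u /andP[h1 h2]; exists u => //.
by apply/eqP; rewrite eqn_leq dist_min //= -ltnS -h dist_adj_le.
Qed.

Lemma dist_adj_cases v w u : e w u ->
  [|| (dist e v u).+1 == dist e v w, dist e v u == dist e v w
    | dist e v u == (dist e v w).+1].
Proof.
move=> h; have h1 := dist_adj_le v h; have h2 := dist_adj_le v (etrans (esym _ _) h).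
case: (ltngtP (dist e v u) (dist e v w)) => H.
- by rewrite eqn_leq H h2.
- by rewrite [_ == _.+1]eqn_leq H h1 !orbT.
- by rewrite ?H ?eqxx ?orbT.
Qed.

Lemma dist_le_diameter v w : (dist e v w <= diameter e)%N.
Proof. exact: leq_trans (leq_bigmax w) (leq_bigmax v). Qed.

End GraphDistance.

Lemma sumr_const_cond (R : pzSemiRingType) (I : finType) (P : pred I) (x : R) :
  \sum_(i | P i) x = #|[set i | P i]|%:R * x.
Proof. by rewrite -[x in LHS]mul1r -big_distrl -sum1dep_card natr_sum. Qed.

Lemma sumr_indicator (R : pzSemiRingType) (I : finType) (P Q : pred I) (x : R) :
  \sum_(i | P i) (Q i)%:R * x = #|[set i | P i & Q i]|%:R * x.
Proof.
rewrite -sumr_const_cond big_mkcondr /=.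
by apply: eq_bigr => i _; case: (Q i); rewrite ?mul1r ?mul0r.
Qed.

Lemma sumr_nat_bool (R : pzSemiRingType) (I : finType) (P : pred I) :
  \sum_i ((P i)%:R : R) = #|[set i | P i]|%:R.
Proof.
by rewrite -sum1dep_card natr_sum [RHS]big_mkcond; apply: eq_bigr => i _; case: (P i).
Qed.

Lemma poly_indicator (F : fieldType) (S : seq F) (z : F) :
  exists q : {poly F}, forall x, x \in S -> q.[x] = (x == z)%:R.
Proof.
pose S' := [seq y <- S | y != z].
exists ((\prod_(y <- S') (z - y))^-1 *: \prod_(y <- S') ('X - y%:P)) => x xS.
rewrite hornerZ.
have -> : (\prod_(y <- S') ('X - y%:P)).[x] = \prod_(y <- S') (x - y).
  by rewrite horner_prod; apply: eq_bigr => y _; rewrite hornerXsubC.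
have [->|xz] := eqVneq x z.
  rewrite mulVf //; rewrite prodf_seq_neq0; apply/allP => y.
  by rewrite mem_filter subr_eq0 eq_sym => /andP[->].
apply/eqP; rewrite mulf_eq0 prodf_seq_eq0; apply/orP; right; apply/hasP.
by exists x; rewrite ?mem_filter ?xz ?xS ?subrr ?eqxx.
Qed.

Lemma char_poly_similar (R : comNzRingType) n (Q Q' B : 'M[R]_n) :
  Q' *m Q = 1%:M -> char_poly (Q' *m B *m Q) = char_poly B.
Proof.
move=> QQ'; have QQ'P : map_mx polyC Q' *m map_mx polyC Q = 1%:M.
  by rewrite -map_mxM QQ' map_mx1.
rewrite /char_poly; have -> : char_poly_mx (Q' *m B *m Q) =
    map_mx polyC Q' *m char_poly_mx B *m map_mx polyC Q.
  rewrite /char_poly_mx mulmxBr mulmxBl !map_mxM mul_mx_scalar -scalemxAl.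
  by rewrite QQ'P scalemx1.
by rewrite !det_mulmx mulrAC -det_mulmx QQ'P det1 mul1r.
Qed.

Section SpectralCalculus.
Variables (T : finType) (e : rel T).
Hypothesis esym : symmetric e.
Local Open Scope sesquilinear_scope.
Local Notation n := #|T|.
Local Notation A := (adj_mx e).
Local Notation P := (spectralmx A).
Local Notation D := (spectral_diag A).

Lemma adj_mx_hermsym : A \is hermsymmx.
Proof.
apply: realsym_hermsym.
  apply/is_hermitianmxP; rewrite expr0 scale1r; apply/matrixP => i j.
  by rewrite !mxE esym.
by apply/mxOverP => i j; rewrite mxE realn.
Qed.

Lemma adj_mx_spectral : A = P^t* *m diag_mx D *m P.
Proof.
have /orthomx_spectralP {1}-> := hermitian_normalmx adj_mx_hermsym.
by rewrite invmx_unitary // spectral_unitarymx.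
Qed.

Lemma spectralmx_mulmx_tV : P *m P^t* = 1%:M.
Proof. exact/unitarymxP/spectral_unitarymx. Qed.

Lemma spectralmx_tV_mulmx : P^t* *m P = 1%:M.
Proof.
by rewrite -invmx_unitary ?mulVmx ?unitarymx_unit ?spectral_unitarymx.
Qed.

Lemma spectral_diag_real j : D 0 j \is Num.real.
Proof. by have /mxOverP := hermitian_spectral_diag_real adj_mx_hermsym; apply. Qed.

Lemma adj_spectrum_perm : perm_eq (adj_spectrum e) [seq D 0 j | j <- enum 'I_n].
Proof.
have char_polyE : char_poly A = \prod_(j < n) ('X - (D 0 j)%:P).
  rewrite {1}adj_mx_spectral char_poly_similar ?spectralmx_tV_mulmx //.
  rewrite char_poly_trig ?diag_mx_is_trig //.
  by apply: eq_bigr => j _; rewrite mxE eqxx mulr1n.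
apply: prod_XsubC_eq; rewrite big_map big_enum /= -char_polyE.
rewrite /adj_spectrum; case: closed_field_poly_normal => s /= ->.
by rewrite (monicP (char_poly_monic _)) scale1r.
Qed.

Definition spectral_fun (h : 'I_n -> algC) : 'M[algC]_n :=
  P^t* *m diag_mx (\row_j h j) *m P.

Lemma eq_spectral_fun h h' : h =1 h' -> spectral_fun h = spectral_fun h'.
Proof. by move=> hh; congr (_ *m diag_mx _ *m _); apply/rowP => j; rewrite !mxE hh. Qed.

Lemma spectral_funE h i j : spectral_fun h i j = \sum_l (P l i)^* * h l * P l j.
Proof. by rewrite /spectral_fun mul_mx_diag !mxE; apply: eq_bigr => l _; rewrite !mxE. Qed.

Lemma spectral_fun_mul_adj h : spectral_fun h *m A = spectral_fun (fun j => h j * D 0 j).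
Proof.
rewrite /spectral_fun [X in _ *m X]adj_mx_spectral !mulmxA.
rewrite mulmxtVK ?spectral_unitarymx // -[_ *m diag_mx _ *m diag_mx _]mulmxA mulmx_diag.
by congr (_ *m diag_mx _ *m _); apply/rowP => j; rewrite !mxE.
Qed.

Lemma adj_mx_exp_spectral m : A ^+ m = spectral_fun (fun j => D 0 j ^+ m).
Proof.
elim: m => [|m IH].
  rewrite expr0 (@eq_spectral_fun _ (fun=> 1)) => [|j]; last by rewrite expr0.
  rewrite /spectral_fun (_ : \row_j 1 = const_mx 1); last by apply/rowP => j; rewrite !mxE.
  by rewrite diag_const_mx mulmx1 spectralmx_tV_mulmx.
rewrite exprSr -mulmxE IH spectral_fun_mul_adj.
by apply: eq_spectral_fun => j; rewrite exprSr.
Qed.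

Lemma poly_adj_mx_spectral (q : {poly algC}) :
  \sum_(m < size q) q`_m *: A ^+ m = spectral_fun (fun j => q.[D 0 j]).
Proof.
apply/matrixP => i j; rewrite summxE spectral_funE.
under eq_bigr do rewrite mxE adj_mx_exp_spectral spectral_funE mulr_sumr.
rewrite exchange_big /=; apply: eq_bigr => l _.
rewrite horner_coef mulr_sumr mulr_suml; apply: eq_bigr => m _.
by rewrite !mulrA [q`_m * _]mulrC.
Qed.

Definition eigenproj (z : algC) : 'M[algC]_n :=
  spectral_fun (fun l => (D 0 l == z)%:R).

Lemma eigenproj_poly z :
  exists q : {poly algC}, \sum_(m < size q) q`_m *: A ^+ m = eigenproj z.
Proof.
have [q hq] := poly_indicator [seq D 0 j | j <- enum 'I_n] z.
exists q; rewrite poly_adj_mx_spectral; apply: eq_spectral_fun => j.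
by rewrite hq ?map_f ?mem_enum.
Qed.

End SpectralCalculus.

Section BoseMesner.
Variables (T : finType) (e : rel T) (a b c : nat -> nat).
Hypotheses (esym : symmetric e) (econn : connected_graph e).
Hypothesis intersection_numbers : forall i, (i <= diameter e)%N -> forall v w : T,
  dist e v w = i ->
  [/\ #|[set u | e w u & (dist e v u).+1 == i]| = c i,
      #|[set u | e w u & dist e v u == i]| = a i &
      #|[set u | e w u & dist e v u == i.+1]| = b i].

Lemma sum_adj_dist v w (f : nat -> algC) :
  \sum_(u | e w u) f (dist e v u) =
    (c (dist e v w))%:R * f (dist e v w).-1 + (a (dist e v w))%:R * f (dist e v w)
    + (b (dist e v w))%:R * f (dist e v w).+1.
Proof.
have [<- <- <-] := intersection_numbers (dist_le_diameter e v w) (erefl (dist e v w)).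
rewrite -!sumr_indicator -!big_split /=; apply: eq_bigr => u /(dist_adj_cases esym econn v).
case/or3P => /eqP h; [rewrite -h | rewrite -h | rewrite h].
all: rewrite ?eqxx ?(gtn_eqF (ltnSn _)) ?(ltn_eqF (ltnSn _)).
all: rewrite ?(gtn_eqF (leqnSn _)) ?(ltn_eqF (leqnSn _)) /=.
all: by rewrite ?mul1r ?mul0r ?addr0 ?add0r.
Qed.

Definition distance_mx (M : 'M[algC]_#|T|) : Prop :=
  exists f : nat -> algC, forall i j, M i j = f (dist e (enum_val i) (enum_val j)).

Lemma distance_mx0 : distance_mx 0.
Proof. by exists (fun=> 0) => i j; rewrite mxE. Qed.

Lemma distance_mxD M N : distance_mx M -> distance_mx N -> distance_mx (M + N).
Proof. by case=> f hf [g hg]; exists (fun i => f i + g i) => i j; rewrite mxE hf hg. Qed.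

Lemma distance_mxZ x M : distance_mx M -> distance_mx (x *: M).
Proof. by case=> f hf; exists (fun i => x * f i) => i j; rewrite mxE hf. Qed.

Lemma distance_mx1 : distance_mx 1.
Proof.
exists (fun i => (i == 0)%N%:R) => i j.
by rewrite !mxE dist_eq0 // (inj_eq enum_val_inj).
Qed.

Lemma distance_mx_mul_adj M : distance_mx M -> distance_mx (M * adj_mx e).
Proof.
case=> f hf; exists (fun i => (c i)%:R * f i.-1 + (a i)%:R * f i + (b i)%:R * f i.+1).
move=> i j; rewrite -mulmxE mxE -sum_adj_dist.
rewrite (eq_bigr (fun l => f (dist e (enum_val i) (enum_val l)) *
   (e (enum_val l) (enum_val j))%:R)); last by move=> l _; rewrite hf mxE.
rewrite -(big_enum_val (fun u => f (dist e (enum_val i) u) * (e u (enum_val j))%:R)).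
rewrite [RHS]big_mkcond /=; apply: eq_bigr => u _.
by rewrite esym; case: (e _ _); rewrite ?mulr1 ?mulr0.
Qed.

Lemma distance_mx_exp m : distance_mx (adj_mx e ^+ m).
Proof.
elim: m => [|m IH]; first by rewrite expr0; apply: distance_mx1.
by rewrite exprSr; apply: distance_mx_mul_adj.
Qed.

Lemma distance_mx_poly (q : {poly algC}) :
  distance_mx (\sum_(m < size q) q`_m *: adj_mx e ^+ m).
Proof.
apply: (big_ind distance_mx); [exact: distance_mx0 | exact: distance_mxD |].
by move=> m _; apply/distance_mxZ/distance_mx_exp.
Qed.

Lemma eigenproj_distance_mx z : distance_mx (eigenproj e z).
Proof. by have [q <-] := eigenproj_poly esym z; apply: distance_mx_poly. Qed.

End BoseMesner.

Lemma normCBM_sq (x y c : algC) : c^* = c -> c * c = 1 ->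
  `|x - c * y| ^+ 2 = `|x| ^+ 2 + `|y| ^+ 2 - c * (x^* * y + (x^* * y)^*).
Proof.
move=> c_real c_sq; rewrite !normCK !rmorphB !rmorphM /= c_real conjCK.
transitivity (x * x^* + y * y^* - c * (x^* * y + x * y^*) + (c * c - 1) * (y * y^*)).
  by ring.
by rewrite c_sq subrr mul0r addr0.
Qed.

Lemma normCBM_sq_le (x w y c c' : algC) : `|c| = 1 ->
  `|x - (c * c') * y| ^+ 2 <= 2 * `|x - c * w| ^+ 2 + 2 * `|w - c' * y| ^+ 2.
Proof.
move=> c_norm; set p := `|x - c * w|; set q := `|w - c' * y|.
have -> : x - (c * c') * y = (x - c * w) + c * (w - c' * y) by ring.
apply: le_trans (_ : (p + q) ^+ 2 <= _).
  apply: lerXn2r; rewrite ?nnegrE ?addr_ge0 ?normr_ge0 //.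
  by apply: le_trans (ler_normD _ _) _; rewrite normrM c_norm mul1r.
rewrite -subr_ge0 (_ : _ - _ = (p - q) ^+ 2); last by ring.
by rewrite -real_normK ?rpredB ?normr_real // exprn_ge0.
Qed.

Lemma normCM_conj_le (x y : algC) : 2 * `|x^* * y| <= `|x| ^+ 2 + `|y| ^+ 2.
Proof.
rewrite normrM norm_conjC -subr_ge0 (_ : _ - _ = (`|x| - `|y|) ^+ 2); last by ring.
by rewrite -real_normK ?rpredB ?normr_real // exprn_ge0.
Qed.

(* Like [Num.sg], but with [sg1 0 = 1], so that [sg1 x] is always a unit. *)
Definition sg1 (x : algC) : algC := if 0 <= x then 1 else -1.

Lemma conj_sg1X x m : (sg1 x ^+ m)^* = sg1 x ^+ m.
Proof. by rewrite rmorphXn /sg1; case: ifP; rewrite ?rmorphN1 ?rmorph1. Qed.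

Lemma sg1X_mul_self x m : sg1 x ^+ m * sg1 x ^+ m = 1.
Proof. by rewrite -exprMn /sg1; case: ifP; rewrite ?mulr1 ?mulrNN ?mulr1 expr1n. Qed.

Lemma norm_sg1X x m : `|sg1 x ^+ m| = 1.
Proof. by rewrite normrX /sg1; case: ifP; rewrite ?normrN normr1 expr1n. Qed.

Lemma sg1_mul_real x : x \is Num.real -> sg1 x * x = `|x|.
Proof.
rewrite /sg1 => xr; case: ifP => [x_ge0|x_lt0]; first by rewrite mul1r ger0_norm.
by rewrite ltr0_norm ?mulN1r // real_ltNge ?x_lt0.
Qed.

Lemma sg1X_mul_addC_le x y m : sg1 x ^+ m * (y + y^*) <= 2 * `|y|.
Proof.
have yr : y + y^* \is Num.real by apply/CrealP; rewrite rmorphD /= conjCK addrC.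
have sr : sg1 x ^+ m \is Num.real by apply/CrealP; rewrite conj_sg1X.
apply: le_trans (real_ler_norm (rpredM sr yr)) _.
rewrite normrM norm_sg1X mul1r mulr2n mulrDl mul1r -{2}(norm_conjC y).
exact: ler_normD.
Qed.

Section Eigenprojection.
Variables (T : finType) (e : rel T) (k : nat) (z : algC).
Hypotheses (esym : symmetric e) (eirr : irreflexive e) (econn : connected_graph e).
Hypothesis regular : forall v, #|[set w | e v w]| = k.

Local Notation n := #|T|.
Local Notation A := (adj_mx e).
Local Notation P := (spectralmx A).
Local Notation D := (spectral_diag A).
Local Notation V := (@enum_val T T).

Local Notation eigenproj := (eigenproj e z).

Definition eigencoord (l i : 'I_n) : algC := (D 0 l == z)%:R * P l i.

Lemma eigenprojE i j : eigenproj i j = \sum_l (eigencoord l i)^* * eigencoord l j.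
Proof.
rewrite /eigenproj spectral_funE; apply: eq_bigr => l _.
rewrite /eigencoord rmorphM /= conjC_nat.
by case: (D 0 l == z); rewrite /= ?mul1r ?mulr1 ?mulr0 ?mul0r.
Qed.

Lemma eigenproj_mul_adj : eigenproj *m A = z *: eigenproj.
Proof.
rewrite /eigenproj spectral_fun_mul_adj //; apply/matrixP => i j.
rewrite spectral_funE [RHS]mxE spectral_funE mulr_sumr; apply: eq_bigr => l _.
by have [->|_] := eqVneq (D 0 l) z; rewrite /=; ring.
Qed.

Lemma adj_mx_rowsum l : \sum_j A l j = k%:R.
Proof.
under eq_bigr do rewrite mxE.
by rewrite -(big_enum_val (fun u => (e (V l) u)%:R)) /= sumr_nat_bool regular.
Qed.

Lemma spectralmx_rowsum l : D 0 l * \sum_j P l j = k%:R * \sum_j P l j.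
Proof.
have PA : P *m A = diag_mx D *m P.
  by rewrite [X in _ *m X](adj_mx_spectral esym) !mulmxA spectralmx_mulmx_tV mul1mx.
transitivity (\sum_j (diag_mx D *m P) l j).
  by rewrite mul_diag_mx; under [RHS]eq_bigr do rewrite mxE; rewrite mulr_sumr.
rewrite -PA; under eq_bigr do rewrite mxE.
rewrite exchange_big /=; under eq_bigr do rewrite -mulr_sumr adj_mx_rowsum.
by rewrite mulr_sumr; apply: eq_bigr => m _; rewrite mulrC.
Qed.

Lemma eigenproj_rowsum_eq0 : z != k%:R -> forall i, \sum_j eigenproj i j = 0.
Proof.
move=> zk i; under eq_bigr do rewrite spectral_funE.
rewrite exchange_big /=; apply: big1 => l _; rewrite -mulr_sumr.
have [Dl|] := eqVneq (D 0 l) z; last by rewrite mulr0 mul0r.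
have := spectralmx_rowsum l; rewrite Dl => /eqP; rewrite -subr_eq0 -mulrBl mulf_eq0.
by rewrite subr_eq0 (negbTE zk) /= => /eqP ->; rewrite mulr0.
Qed.

Lemma eigencoord_eigenvalue l i : D 0 l = z -> eigencoord l i = P l i.
Proof. by rewrite /eigencoord => ->; rewrite eqxx mul1r. Qed.

Variable beta : nat -> algC.
Hypothesis eigenproj_dist : forall i j, eigenproj i j = beta (dist e (V i) (V j)).

Lemma beta0E i : beta 0 = \sum_l `|eigencoord l i| ^+ 2.
Proof.
rewrite -{1}(dist_xx econn (V i)) -eigenproj_dist eigenprojE.
by apply: eq_bigr => l _; rewrite normCK mulrC.
Qed.

Lemma beta0_ge0 (i : 'I_n) : 0 <= beta 0.
Proof. by rewrite (beta0E i); apply: sumr_ge0 => l _; rewrite exprn_ge0. Qed.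

Lemma conj_beta0 (i : 'I_n) : (beta 0)^* = beta 0.
Proof. exact/conj_Creal/ger0_real/(beta0_ge0 i). Qed.

Lemma norm_beta_dist_le v u : `|beta (dist e v u)| <= beta 0.
Proof.
rewrite -[v](enum_rankK v) -[u](enum_rankK u) -eigenproj_dist.
set i := enum_rank v; set j := enum_rank u.
rewrite -(ler_pM2l (ltr0n _ 2)) eigenprojE.
apply: le_trans (_ : _ <= \sum_l (`|eigencoord l i| ^+ 2 + `|eigencoord l j| ^+ 2)) _.
  apply: le_trans (ler_wpM2l (ler0n _ 2) (ler_norm_sum _ _ _)) _.
  by rewrite mulr_sumr; apply: ler_sum => l _; apply: normCM_conj_le.
by rewrite big_split /= -!beta0E mulr2n mulrDl mul1r.
Qed.

Definition defect i j c := \sum_l `|eigencoord l i - c * eigencoord l j| ^+ 2.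

Lemma defect_ge0 i j c : 0 <= defect i j c.
Proof. by apply: sumr_ge0 => l _; rewrite exprn_ge0. Qed.

Lemma defectE i j c : c^* = c -> c * c = 1 ->
  defect i j c = 2 * beta 0 - c * (eigenproj i j + (eigenproj i j)^*).
Proof.
move=> c_real c_sq; rewrite /defect.
under eq_bigr do rewrite normCBM_sq //.
rewrite sumrB big_split /= -!beta0E -mulr_sumr eigenprojE rmorph_sum /=.
by rewrite big_split /= mulr2n mulrDl mul1r.
Qed.

Lemma defect_mul_le i w j c c' : `|c| = 1 ->
  defect i j (c * c') <= 2 * defect i w c + 2 * defect w j c'.
Proof.
move=> c_norm; rewrite /defect !mulr_sumr -big_split /=.
by apply: ler_sum => l _; apply: normCBM_sq_le.
Qed.

Definition edge_defect := 2 * beta 0 - sg1 z * (beta 1 + (beta 1)^*).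

Lemma defect_adj i j : e (V i) (V j) -> defect i j (sg1 z) = edge_defect.
Proof.
move=> ij; have := defectE i j (conj_sg1X z 1) (sg1X_mul_self z 1).
by rewrite expr1 => ->; rewrite eigenproj_dist dist_adj.
Qed.

(* Along a shortest path, [`|a - b| ^+ 2 <= 2 `|a - c| ^+ 2 + 2 `|c - b| ^+ 2]
   at most quadruples the defect at each step. *)
Lemma defect_dist_le m i j : dist e (V i) (V j) = m ->
  defect i j (sg1 z ^+ m) <= (4 ^ m - 1)%:R * edge_defect.
Proof.
elim: m i j => [|m IH] i j.
  move/eqP; rewrite (dist_eq0 econn) => /eqP /enum_val_inj ->.
  rewrite /defect big1 ?mul0r // => l _.
  by rewrite expr0 mul1r subrr normr0 expr0n.
case/(dist_predP econn) => u ui_adj dist_iu.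
have {}IH := IH i (enum_rank u); rewrite enum_rankK in IH; have {}IH := IH dist_iu.
have edge := @defect_adj (enum_rank u) j; rewrite enum_rankK in edge.
have {}edge := edge ui_adj.
have edge_ge0 : 0 <= edge_defect by rewrite -edge defect_ge0.
rewrite exprSr; apply: le_trans (@defect_mul_le i (enum_rank u) j _ (sg1 z) (norm_sg1X z m)) _.
set bound := 2 * ((4 ^ m - 1)%:R * edge_defect) + 2 * edge_defect.
rewrite edge; apply: le_trans (_ : _ <= bound) _; first by rewrite lerD2r ler_wpM2l.
have -> : bound = (2 * 4 ^ m)%:R * edge_defect.
  by rewrite /bound natrM natrB ?expn_gt0 //; ring.
rewrite ler_wpM2r // ler_nat expnS.
have : (0 < 4 ^ m)%N by rewrite expn_gt0.
lia.
Qed.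

Lemma beta1_eigen (i : 'I_n) : k%:R * beta 1 = z * beta 0.
Proof.
have := congr1 (fun M : 'M_n => M i i) eigenproj_mul_adj.
rewrite [RHS]mxE eigenproj_dist dist_xx // mxE => <-.
under eq_bigr do rewrite eigenproj_dist mxE.
rewrite -(big_enum_val (fun u => beta (dist e (V i) u) * (e u (V i))%:R)) /=.
rewrite (eq_bigr (fun u => (e (V i) u)%:R * beta 1)).
  by rewrite -mulr_suml sumr_nat_bool regular.
move=> u _; rewrite esym; case ei: (e (V i) u); last by rewrite !mulr0 mul0r.
by rewrite dist_adj // mulr1 mul1r.
Qed.

Lemma edge_defectE (i : 'I_n) : z \is Num.real ->
  k%:R * edge_defect = 2 * beta 0 * (k%:R - `|z|).
Proof.
move=> zr; have kb1 := beta1_eigen i.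
have kb1' : k%:R * (beta 1)^* = z * beta 0.
  have := congr1 Num.conj kb1; rewrite !rmorphM /= conjC_nat => ->.
  by rewrite (conj_Creal zr) (conj_beta0 i).
rewrite -(sg1_mul_real zr) /edge_defect.
transitivity (2 * k%:R * beta 0 - sg1 z * (k%:R * beta 1 + k%:R * (beta 1)^*)).
  by ring.
by rewrite kb1 kb1'; ring.
Qed.

Lemma sum_beta_dist_eq0 : z != k%:R -> forall v, \sum_u beta (dist e v u) = 0.
Proof.
move=> zk v; rewrite -[RHS](eigenproj_rowsum_eq0 zk (enum_rank v)).
under [RHS]eq_bigr do rewrite eigenproj_dist enum_rankK.
by rewrite -(big_enum_val (fun u => beta (dist e v u))).
Qed.

Lemma norm_beta_kdist_le v t : z != k%:R ->
  `|beta t| * (kdist e v t)%:R <= (n - kdist e v t)%:R * beta 0.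
Proof.
move=> zk; have := sum_beta_dist_eq0 zk v.
rewrite (bigID (fun u => dist e v u == t)) /= => /eqP; rewrite addr_eq0 => /eqP.
rewrite (eq_bigr (fun=> beta t)) => [|u /eqP -> //].
rewrite sumr_const_cond => sum_t.
rewrite mulrC -normr_nat -normrM [_ * beta t]sum_t normrN.
apply: le_trans (ler_norm_sum _ _ _) _.
apply: le_trans (ler_sum (G := fun=> beta 0) _ (fun u _ => norm_beta_dist_le v u)) _.
rewrite sumr_const_cond ler_wpM2r ?(beta0_ge0 (enum_rank v)) // ler_nat.
rewrite /kdist -(cardsC [set w | dist e v w == t]) addKn.
by rewrite subset_leq_card //; apply/subsetP => u; rewrite !inE.
Qed.

Lemma beta0_gt0 j : D 0 j = z -> 0 < beta 0.
Proof.
move=> Dj; rewrite lt_def (beta0_ge0 j) andbT; apply/eqP => beta0_eq0.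
have Pj0 i : P j i = 0.
  have : \sum_l `|eigencoord l i| ^+ 2 == 0 by rewrite -beta0E beta0_eq0.
  rewrite psumr_eq0 => [/allP/(_ j (mem_index_enum _))|l _]; last exact: exprn_ge0.
  by rewrite /= sqrf_eq0 normr_eq0 eigencoord_eigenvalue // => /eqP.
have := congr1 (fun M : 'M_n => M j j) (spectralmx_mulmx_tV e); rewrite !mxE eqxx /=.
rewrite big1 => [/eqP|i _]; first by rewrite eq_sym oner_eq0.
by rewrite !mxE Pj0 mul0r.
Qed.

Lemma beta_dist_lower v w :
  2 * beta 0 - 2 * `|beta (dist e v w)| <= (4 ^ dist e v w - 1)%:R * edge_defect.
Proof.
pose i := enum_rank v; pose j := enum_rank w.
have dist_ij : dist e (V i) (V j) = dist e v w by rewrite !enum_rankK.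
apply: le_trans (defect_dist_le dist_ij).
rewrite defectE ?conj_sg1X ?sg1X_mul_self // eigenproj_dist dist_ij.
by rewrite lerD2l lerN2 sg1X_mul_addC_le.
Qed.

Lemma beta_kdist_small v t : z != k%:R -> (3 * n <= 4 * kdist e v t)%N ->
  3 * `|beta t| <= beta 0.
Proof.
move=> zk kt_large; have n_gt0 : (0 < n)%N by apply/card_gt0P; exists v.
rewrite -(ler_pM2r (_ : 0 < (kdist e v t)%:R)); last by rewrite ltr0n; lia.
apply: le_trans (_ : _ <= 3 * ((n - kdist e v t)%:R * beta 0)) _.
  by rewrite -mulrA ler_wpM2l ?norm_beta_kdist_le.
by rewrite mulrA -natrM mulrC ler_wpM2l ?(beta0_ge0 (enum_rank v)) // ler_nat; lia.
Qed.

Lemma spectral_gap_bound j0 v t d : D 0 j0 = z -> z != k%:R ->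
  (1 <= t <= d)%N -> (3 * n <= 4 * kdist e v t)%N ->
  k%:R <= (3 * 4 ^ d)%:R * (k%:R - `|z|).
Proof.
move=> Dj0 zk /andP[t_gt0 t_le_d] kt_large.
have zr : z \is Num.real by rewrite -Dj0 (spectral_diag_real esym).
have beta0_pos := beta0_gt0 Dj0.
have beta_t_small := beta_kdist_small zk kt_large.
have [w] : exists w, w \in [set w | dist e v w == t].
  by apply/card_gt0P; rewrite -/(kdist e v t); have := ltn_ord j0; lia.
rewrite inE => /eqP dist_vw; have := beta_dist_lower v w; rewrite dist_vw => far.
have gap : 2 * k%:R <= 3 * (4 ^ t - 1)%:R * (k%:R - `|z|).
  rewrite -(ler_pM2l (_ : 0 < 2 * beta 0)) ?mulr_gt0 ?ltr0n //.
  have -> : 2 * beta 0 * (3 * (4 ^ t - 1)%:R * (k%:R - `|z|)) =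
      3 * (4 ^ t - 1)%:R * (k%:R * edge_defect) by rewrite (edge_defectE j0 zr); ring.
  apply: le_trans (_ : _ <= 3 * (k%:R * (2 * beta 0 - 2 * `|beta t|))) _; last first.
    by rewrite -mulrA ler_wpM2l ?ler0n // mulrCA ler_wpM2l ?ler0n.
  rewrite -subr_ge0 (_ : _ - _ = 2 * k%:R * (beta 0 - 3 * `|beta t|)); last by ring.
  by rewrite mulr_ge0 ?mulr_ge0 ?ler0n ?subr_ge0.
have gap_ge0 : 0 <= k%:R - `|z|.
  rewrite -(pmulr_rge0 _ (_ : 0 < 3 * (4 ^ t - 1)%:R)); last first.
    by rewrite mulr_gt0 ?ltr0n ?subn_gt0 ?(leq_trans _ (leq_pexp2l _ t_gt0)).
  by apply: le_trans gap; rewrite mulr_ge0 ?ler0n.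
apply: le_trans (_ : _ <= 2 * k%:R) _; first by rewrite ler_peMl ?ler0n ?ler1n.
apply: le_trans gap _; rewrite ler_wpM2r // natrM ler_wpM2l ?ler0n // ler_nat.
by apply: leq_trans (leq_subr _ _) _; rewrite leq_pexp2l.
Qed.

Lemma eigenrow_const l i i' : z = k%:R -> (0 < k)%N -> D 0 l = z ->
  P l i = P l i'.
Proof.
move=> zk k_gt0 Dl.
have sg1z : sg1 z = 1 by rewrite /sg1 zk ler0n.
have beta1E : beta 1 = beta 0.
  by apply: (mulfI (_ : k%:R != 0)); rewrite ?pnatr_eq0 -?lt0n // (beta1_eigen i) zk.
have no_defect : defect i i' 1 = 0.
  apply/eqP; rewrite eq_le defect_ge0 andbT.
  have := defect_dist_le (erefl (dist e (V i) (V i'))).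
  rewrite sg1z expr1n /edge_defect sg1z beta1E (conj_beta0 i) mul1r.
  by rewrite -mulr2n [2 * _]mulr_natl subrr mulr0.
move/eqP: no_defect; rewrite psumr_eq0 => [|l' _]; last exact: exprn_ge0.
move=> /allP/(_ l (mem_index_enum _)) /=.
by rewrite sqrf_eq0 normr_eq0 mul1r subr_eq0 !eigencoord_eigenvalue // => /eqP.
Qed.

Lemma eigenvalue_k_simple j1 j2 : z = k%:R -> (0 < k)%N ->
  D 0 j1 = z -> D 0 j2 = z -> j1 = j2.
Proof.
move=> zk k_gt0 Dj1 Dj2; apply/eqP; apply: contraT => j12.
have PP l l' : D 0 l = z -> D 0 l' = z ->
    (P *m P^t*)%sesqui l l' = n%:R * (P l j1 * (P l' j1)^*).
  move=> Dl Dl'; rewrite mxE.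
  under eq_bigr do
    rewrite !mxE (eigenrow_const _ j1 zk k_gt0 Dl) (eigenrow_const _ j1 zk k_gt0 Dl').
  by rewrite sumr_const card_ord mulr_natl.
rewrite spectralmx_mulmx_tV in PP.
have := PP _ _ Dj1 Dj2; have := PP _ _ Dj1 Dj1; have := PP _ _ Dj2 Dj2.
rewrite !mxE !eqxx (negbTE j12) /= => /eqP + /eqP + /eqP.
have n_gt0 : (0 < n)%N by apply: leq_ltn_trans (ltn_ord j1).
rewrite [0 == _]eq_sym !mulf_eq0 !(pnatr_eq0, oner_eq0) conjC_eq0 (gtn_eqF n_gt0) /=.
move=> /eqP h2 /eqP h1 /orP[] /eqP h0; [move: h1 | move: h2].
all: by rewrite h0 ?conjC0 ?mul0r ?mulr0 => /eqP; rewrite oner_eq0.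
Qed.

End Eigenprojection.

Lemma three_quarters_le (R : numFieldType) (n m : nat) :
  (1 - 4^-1) * n%:R <= m%:R :> R -> (3 * n <= 4 * m)%N.
Proof.
rewrite -(ler_pM2l (_ : 0 < 4)) ?ltr0n // mulrA.
rewrite (_ : 4 * (1 - 4^-1) = 3); last by field.
by rewrite -[_ * n%:R]natrM -[_ * m%:R]natrM ler_nat.
Qed.

Lemma ler_of_gap (R : numFieldType) (k x Q : R) :
  0 < Q -> k <= Q * (k - x) -> x <= k * (1 - Q^-1).
Proof.
move=> Q_gt0 gap; rewrite -subr_ge0.
have -> : k * (1 - Q^-1) - x = (Q * (k - x) - k) / Q by field; rewrite gt_eqF.
by apply: divr_ge0; [rewrite subr_ge0 | apply: ltW].
Qed.

Lemma count_gt1P (T : eqType) (P : pred T) (s : seq T) : uniq s ->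
  (1 < count P s)%N -> exists x y, [/\ x != y, P x & P y].
Proof.
rewrite -size_filter => /(filter_uniq P).
have : all P (filter P s) by apply/allP => x; rewrite mem_filter => /andP[].
case: (filter P s) => [|x [|y r]] //= /and3P[Px Py _] /andP[xr _] _.
by exists x, y; split=> //; apply: contraNneq xr => ->; rewrite mem_head.
Qed.

Lemma k_notin_rem_adj_spectrum (T : finType) (e : rel T) (k : nat) :
  symmetric e -> irreflexive e -> connected_graph e ->
  (forall v, #|[set w | e v w]| = k) -> distance_mx e (eigenproj e k%:R) ->
  (0 < k)%N -> k%:R \notin rem k%:R (adj_spectrum e).
Proof.
move=> esym eirr econn regular [beta Ek] k_gt0; apply/negP.
rewrite -has_pred1 has_count count_mem_rem eqxx subn_gt0.
rewrite (permP (adj_spectrum_perm esym)) count_map => /(count_gt1P (enum_uniq _)).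
move=> [j1 [j2 [j12 /eqP Dj1 /eqP Dj2]]].
by move/eqP: j12; apply; apply: (eigenvalue_k_simple esym eirr econn regular Ek).
Qed.

Unset Implicit Arguments.

Theorem theorem3 (d : nat) (hd : (2 <= d)%N) :
  exists eps eta : algC, 0 < eps /\ 0 < eta /\
    forall (T : finType) (e : rel T) (k : nat),
      distance_regular e d ->
      (forall v : T, #|[set w | e v w]| = k) ->
      (exists t, [/\ (1 <= t <= d)%N &
                     forall v : T, (1 - eps) * (#|T|%:R) <= (kdist e v t)%:R]) ->
      zero_weight_spectral_radius e k <= k%:R * (1 - eta).
Proof.
pose Q : algC := (3 * 4 ^ d)%:R.
have Q_gt0 : 0 < Q by rewrite ltr0n muln_gt0 expn_gt0.
exists 4^-1, Q^-1; split; first by rewrite invr_gt0 ltr0n.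
split; first by rewrite invr_gt0.
move=> T e k [[eirr esym] econn diam_e [a [b [c ab_c]]]] regular [t [td kt_large]].
rewrite -diam_e in ab_c.
have Ek z := eigenproj_distance_mx esym econn ab_c z.
rewrite /zero_weight_spectral_radius big_seq.
apply: (big_ind (fun x => x <= k%:R * (1 - Q^-1))) => [|x y|z z_rem].
- by rewrite mulr_ge0 ?ler0n // subr_ge0 invf_le1 // ler1n muln_gt0 expn_gt0.
- by rewrite /Order.max; case: ifP.
have [zk|zk] := eqVneq z k%:R.
  have [k0|k_gt0] := posnP k; first by rewrite zk k0 normr0 mul0r.
  have := k_notin_rem_adj_spectrum esym eirr econn regular (Ek _) k_gt0.
  by rewrite -{1}zk z_rem.
move: (mem_rem z_rem); rewrite (perm_mem (adj_spectrum_perm esym)) => /mapP[j0 _ Dj0].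
have [beta Ez] := Ek z.
have kt_ge := three_quarters_le (kt_large (enum_val j0)).
have := spectral_gap_bound esym eirr econn regular Ez (sym_eq Dj0) zk td kt_ge.
exact: ler_of_gap Q_gt0.
Qed.
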